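(* Let $C\in\mathbb R^3$ be a unit vector. The set $\Delta=\{(x\cdot y,\ x\cdot C,\ y\cdot C): x,y\in\mathbb S^2\}\subset\mathbb R^3$ is convex.
   Context: $\mathbb S^2$ is the unit sphere in $\mathbb R^3$ and $\cdot$ is the Euclidean inner product. *)

From Stdlib Require Import Reals.
Open Scope R_scope.

Definition R3 : Type := (R * R * R)%type.

Definition dot (u v : R3) : R :=
  let '(u1, u2, u3) := u in let '(v1, v2, v3) := v in
  u1 * v1 + u2 * v2 + u3 * v3.

Definition in_S2 (x : R3) : Prop := dot x x = 1.

Definition DeltaSet (C : R3) (p : R3) : Prop :=
  exists x y : R3, in_S2 x /\ in_S2 y /\ p = (dot x y, dot x C, dot y C).

Definition add3 (u v : R3) : R3 :=
  let '(u1, u2, u3) := u in let '(v1, v2, v3) := v in (u1 + v1, u2 + v2, u3 + v3).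

Definition scal3 (t : R) (u : R3) : R3 :=
  let '(u1, u2, u3) := u in (t * u1, t * u2, t * u3).

Definition convex (S : R3 -> Prop) : Prop :=
  forall p q : R3, S p -> S q -> forall t : R, 0 <= t <= 1 ->
    S (add3 (scal3 t p) (scal3 (1 - t) q)).

(* The triple (c, a, b) lies in Delta exactly when the Gram matrix
   [[1, c, a], [c, 1, b], [a, b, 1]] is positive semidefinite: the Gram matrix
   of x, y, C is, and conversely a positive semidefinite matrix with unit
   diagonal factors as L L^T (a 3x3 Cholesky decomposition), whose rows can be
   read in an orthonormal frame (C, e1, e2).  Positive semidefiniteness is a
   family of inequalities linear in (c, a, b), hence convex. *)
From Stdlib Require Import Reals Lra Psatz.
Open Scope R_scope.

Lemma dot_comm (u v : R3) : dot u v = dot v u.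
Proof. destruct u as [[u1 u2] u3], v as [[v1 v2] v3]; unfold dot; ring. Qed.

Lemma dot_scal3_r (t : R) (u v : R3) : dot u (scal3 t v) = t * dot u v.
Proof. destruct u as [[u1 u2] u3], v as [[v1 v2] v3]; unfold dot, scal3; ring. Qed.

Definition lincomb3 (al be ga : R) (u v w : R3) : R3 :=
  add3 (scal3 al u) (add3 (scal3 be v) (scal3 ga w)).

Lemma dot_lincomb3_l (al be ga : R) (u v w z : R3) :
  dot (lincomb3 al be ga u v w) z = al * dot u z + be * dot v z + ga * dot w z.
Proof.
  destruct u as [[u1 u2] u3], v as [[v1 v2] v3], w as [[w1 w2] w3], z as [[z1 z2] z3].
  unfold lincomb3, dot, add3, scal3; ring.
Qed.

Lemma dot_lincomb3 (al be ga al' be' ga' : R) (u v w : R3) :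
  dot (lincomb3 al be ga u v w) (lincomb3 al' be' ga' u v w) =
  al * al' * dot u u + be * be' * dot v v + ga * ga' * dot w w
  + (al * be' + be * al') * dot u v + (al * ga' + ga * al') * dot u w
  + (be * ga' + ga * be') * dot v w.
Proof.
  destruct u as [[u1 u2] u3], v as [[v1 v2] v3], w as [[w1 w2] w3].
  unfold lincomb3, dot, add3, scal3; ring.
Qed.

Lemma dot_self_ge0 (u : R3) : 0 <= dot u u.
Proof. destruct u as [[u1 u2] u3]; unfold dot; nra. Qed.

Definition cross (u v : R3) : R3 :=
  let '(u1, u2, u3) := u in let '(v1, v2, v3) := v in
  (u2 * v3 - u3 * v2, u3 * v1 - u1 * v3, u1 * v2 - u2 * v1).

Lemma dot_cross_l (u v : R3) : dot u (cross u v) = 0.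
Proof. destruct u as [[u1 u2] u3], v as [[v1 v2] v3]; unfold dot, cross; ring. Qed.

Lemma dot_cross_r (u v : R3) : dot v (cross u v) = 0.
Proof. destruct u as [[u1 u2] u3], v as [[v1 v2] v3]; unfold dot, cross; ring. Qed.

Lemma dot_cross_cross (u v : R3) :
  dot (cross u v) (cross u v) = dot u u * dot v v - dot u v * dot u v.
Proof. destruct u as [[u1 u2] u3], v as [[v1 v2] v3]; unfold dot, cross; ring. Qed.

Lemma exists_orthogonal_nonzero (c : R3) : exists v : R3, dot c v = 0 /\ dot v v <> 0.
Proof.
  destruct c as [[c1 c2] c3]; unfold dot.
  destruct (Req_dec (c1 * c1 + c2 * c2) 0) as [h | h].
  - exists (1, 0, 0); split; [nra | lra].
  - exists (- c2, c1, 0); split; [ring | nra].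
Qed.

Lemma exists_unit_orthogonal (c : R3) : exists e : R3, dot c e = 0 /\ dot e e = 1.
Proof.
  destruct (exists_orthogonal_nonzero c) as [v [Hcv Hv]].
  pose proof (dot_self_ge0 v) as Hv0.
  assert (Hs : 0 < sqrt (dot v v)) by (apply sqrt_lt_R0; lra).
  exists (scal3 (/ sqrt (dot v v)) v); split.
  - rewrite dot_scal3_r, Hcv; ring.
  - rewrite dot_scal3_r, (dot_comm (scal3 _ v)), dot_scal3_r, <- Rmult_assoc, <- Rinv_mult,
      sqrt_sqrt; [field |]; lra.
Qed.

Lemma orthonormal_frame (c : R3) : dot c c = 1 -> exists e1 e2 : R3,
  dot e1 e1 = 1 /\ dot e2 e2 = 1 /\ dot c e1 = 0 /\ dot c e2 = 0 /\ dot e1 e2 = 0.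
Proof.
  intros Hc.
  destruct (exists_unit_orthogonal c) as [e1 [Hce1 He1]].
  exists e1, (cross c e1).
  rewrite dot_cross_cross, dot_cross_l, dot_cross_r, Hc, He1, Hce1.
  repeat split; ring.
Qed.

Definition gram_form (c a b z1 z2 z3 : R) : R :=
  z1 * z1 + z2 * z2 + z3 * z3 + 2 * c * z1 * z2 + 2 * a * z1 * z3 + 2 * b * z2 * z3.

Definition gram_psd (p : R3) : Prop :=
  let '(c, a, b) := p in forall z1 z2 z3 : R, 0 <= gram_form c a b z1 z2 z3.

Lemma gram_psd_convex : convex gram_psd.
Proof.
  intros [[c a] b] [[c' a'] b'] Hp Hq t Ht z1 z2 z3; simpl in *.
  specialize (Hp z1 z2 z3); specialize (Hq z1 z2 z3); unfold gram_form in *.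
  nra.
Qed.

Lemma gram_psd_of_DeltaSet (C p : R3) : dot C C = 1 -> DeltaSet C p -> gram_psd p.
Proof.
  intros HC [x [y [Hx [Hy ->]]]] z1 z2 z3; unfold in_S2 in *.
  pose proof (dot_self_ge0 (lincomb3 z1 z2 z3 x y C)) as Hw.
  rewrite dot_lincomb3, Hx, Hy, HC in Hw.
  unfold gram_form; lra.
Qed.

Lemma binary_form_psd_det (A B D : R) :
  (forall z1 z2, 0 <= A * z1 * z1 + B * z2 * z2 + 2 * D * z1 * z2) -> D * D <= A * B.
Proof.
  intros H.
  assert (HA : 0 <= A) by (specialize (H 1 0); lra).
  destruct (Rle_lt_or_eq_dec 0 A HA) as [HA' | <-].
  - specialize (H D (- A)).
    assert (0 <= A * (A * B - D * D)) by nra.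
    nra.
  - destruct (Req_dec D 0) as [-> | HD]; [lra |].
    specialize (H (- (B + 1) / (2 * D)) 1).
    replace (2 * D * (- (B + 1) / (2 * D)) * 1) with (- (B + 1)) in H by (field; lra).
    lra.
Qed.

Lemma cholesky2 (A B D : R) : 0 <= A -> 0 <= B -> D * D <= A * B ->
  exists p q r : R, p * p = A /\ p * q = D /\ q * q + r * r = B.
Proof.
  intros HA HB HD.
  destruct (Rle_lt_or_eq_dec 0 A HA) as [HA' | <-].
  - assert (Hs : sqrt A * sqrt A = A) by (apply sqrt_sqrt; lra).
    assert (Hs0 : 0 < sqrt A) by (apply sqrt_lt_R0; lra).
    assert (HE : 0 <= B - D * D / A).
    { apply (Rmult_le_reg_r A); [lra |].
      unfold Rdiv; rewrite Rmult_minus_distr_r, Rmult_assoc, Rinv_l; lra. }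
    exists (sqrt A), (D / sqrt A), (sqrt (B - D * D / A)).
    rewrite (sqrt_sqrt (B - _)) by exact HE.
    repeat split; [exact Hs | field; lra |].
    replace (D / sqrt A * (D / sqrt A)) with (D * D / (sqrt A * sqrt A)) by (field; lra).
    rewrite Hs; ring.
  - assert (D = 0) by nra; subst D.
    exists 0, (sqrt B), 0.
    rewrite sqrt_sqrt by exact HB.
    repeat split; ring.
Qed.

Lemma gram_psd_factor (c a b : R) : gram_psd (c, a, b) ->
  exists p q r : R, a * a + p * p = 1 /\ b * b + q * q + r * r = 1 /\ a * b + p * q = c.
Proof.
  simpl; unfold gram_form; intros H.
  assert (HA : 0 <= 1 - a * a) by (specialize (H 1 0 (- a)); nra).
  assert (HB : 0 <= 1 - b * b) by (specialize (H 0 1 (- b)); nra).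
  assert (HD : (c - a * b) * (c - a * b) <= (1 - a * a) * (1 - b * b)).
  (* Eliminating z3 leaves the Schur complement of the entry 1 in position (3,3). *)
  { apply binary_form_psd_det; intros z1 z2.
    specialize (H z1 z2 (- (a * z1 + b * z2))); nra. }
  destruct (cholesky2 _ _ _ HA HB HD) as [p [q [r [Hp [Hpq Hqr]]]]].
  exists p, q, r; repeat split; lra.
Qed.

Lemma DeltaSet_of_gram_psd (C p : R3) : dot C C = 1 -> gram_psd p -> DeltaSet C p.
Proof.
  destruct p as [[c a] b]; intros HC Hp.
  destruct (gram_psd_factor c a b Hp) as [p [q [r [Hx [Hy Hxy]]]]].
  destruct (orthonormal_frame C HC) as [e1 [e2 [He1 [He2 [HCe1 [HCe2 He12]]]]]].
  exists (lincomb3 a p 0 C e1 e2), (lincomb3 b q r C e1 e2); unfold in_S2.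
  rewrite !dot_lincomb3, !dot_lincomb3_l, (dot_comm e1 C), (dot_comm e2 C),
    HC, He1, He2, HCe1, HCe2, He12.
  repeat split; [lra | lra |]; f_equal; [f_equal |]; lra.
Qed.

Theorem mainTheorem5 (C : R3) (hC : dot C C = 1) : convex (DeltaSet C).
Proof.
  intros p q Hp Hq t Ht.
  apply DeltaSet_of_gram_psd; [exact hC |].
  apply gram_psd_convex; [| | exact Ht]; apply (gram_psd_of_DeltaSet C); assumption.
Qed.
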